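(* Let $V$ be a commutative valuation domain with quotient field $F$, $K/F$ a finite Galois extension with group $G$, $S$ the integral closure of $V$ in $K$, and $f:G\times G\to S\setminus\{0\}$ a normalized $2$-cocycle such that $f(\sigma,\tau)\notin M^2$ for every $\sigma,\tau\in G$ and every maximal ideal $M$ of $S$. Then for each maximal ideal $M$ of $S$, the graph $\mathrm{Gr}(f^M)$ is a chain.
   Context: $V$ has arbitrary Krull dimension. A normalized 2-cocycle satisfies $\sigma(f(\tau,\gamma))f(\sigma,\tau\gamma)=f(\sigma,\tau)f(\sigma\tau,\gamma)$, $f(1,\sigma)=f(\sigma,1)=1$. $H=\{\sigma\in G:f(\sigma,\sigma^{-1})\in U(S)\}$, a subgroup. For a maximal ideal $M$ of $S$, $\sigma H\le_M\tau H$ iff $f(\sigma,\sigma^{-1}\tau)\notin M$ is a well-defined preorder on the left coset space $G/H$; $\mathrm{Gr}(f^M)$ is the induced partial order on its equivalence classes (where $\sigma H\sim\tau H$ iff $\sigma H\le_M\tau H$ and $\tau H\le_M\sigma H$). A chain is a totally ordered set. *)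

From HB Require Import structures.
From mathcomp Require Import all_boot all_order all_algebra all_fingroup all_field.
Set Implicit Arguments. Unset Strict Implicit. Unset Printing Implicit Defensive.
Import GRing.Theory.
Local Open Scope ring_scope.

Section Defs.
Variables (F : fieldType) (L : splittingFieldType F).

(* V is a valuation domain with quotient field F: a subring of F such that
   for every nonzero x, x or x^-1 lies in V. *)
Definition valuation_ring_of (V : {pred F}) : Prop :=
  [/\ 1 \in V, {in V &, forall x y, x - y \in V}, {in V &, forall x y, x * y \in V}
    & forall x : F, x != 0 -> x \in V \/ x^-1 \in V].

Definition integral_over (V : {pred F}) (x : L) : Prop :=
  exists p : {poly F}, [/\ p \is monic, p \is a polyOver V
                         & root (map_poly (in_alg L) p) x].

Definition unit_in (S : L -> Prop) (x : L) : Prop :=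
  S x /\ exists y, S y /\ x * y = 1.

Definition ideal_of (S J : L -> Prop) : Prop :=
  [/\ forall x, J x -> S x, J 0, (forall x y, J x -> J y -> J (x + y)),
      (forall x, J x -> J (- x)) & (forall s x, S s -> J x -> J (s * x))].

Definition maximal_ideal_of (S M : L -> Prop) : Prop :=
  [/\ ideal_of S M, ~ M 1 &
      forall J, ideal_of S J -> (forall x, M x -> J x) -> ~ J 1 ->
        forall x, J x -> M x].

Definition ideal_sq (M : L -> Prop) (x : L) : Prop :=
  exists s : seq (L * L), (forall p, p \in s -> M p.1 /\ M p.2) /\
    x = \sum_(p <- s) p.1 * p.2.

(* composition sigma o tau (MathComp's group law is (s * t) a = t (s a)) *)
Definition gcomp (s t : gal_of {:L}) : gal_of {:L} := (t * s)%g.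

Definition normalized_2cocycle (f : gal_of {:L} -> gal_of {:L} -> L) : Prop :=
  (forall s t g : gal_of {:L}, s (f t g) * f s (gcomp t g) = f s t * f (gcomp s t) g) /\
  (forall s : gal_of {:L}, f 1%g s = 1 /\ f s 1%g = 1).

Definition inH (S : L -> Prop) (f : gal_of {:L} -> gal_of {:L} -> L)
  (s : gal_of {:L}) : Prop := unit_in S (f s (s^-1)%g).

Definition lcoset_of (S : L -> Prop) f (s : gal_of {:L}) : gal_of {:L} -> Prop :=
  fun x => exists h, inH S f h /\ x = gcomp s h.

Definition is_left_coset S f (A : gal_of {:L} -> Prop) : Prop :=
  exists s, A = lcoset_of S f s.

Definition coset_leM S f (M : L -> Prop) (A B : gal_of {:L} -> Prop) : Prop :=
  exists s t : gal_of {:L}, [/\ A = lcoset_of S f s, B = lcoset_of S f t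
                & ~ M (f s (gcomp (s^-1)%g t))].

(* Gr(f^M) is a chain: the partial order on classes of the preorder is total,
   i.e. any two cosets are comparable for <=_M. *)
Definition Gr_is_chain S f M : Prop :=
  forall A B, is_left_coset S f A -> is_left_coset S f B ->
    coset_leM S f M A B \/ coset_leM S f M B A.

End Defs.

(* If neither f(s, s^-1 t) nor f(t, t^-1 s) avoided M, then with b = s^-1 t the
   cocycle identity at (s, b, b^-1) gives s(f(b, b^-1)) = f(s, b) f(t, b^-1) in
   M^2, i.e. f(b, b^-1) lies in the square of the maximal ideal s^-1(M), which
   the hypothesis forbids. *)
From HB Require Import structures.
From mathcomp Require Import all_boot all_order all_algebra all_fingroup all_field.
From Stdlib Require Import Classical.
Set Implicit Arguments.
Unset Strict Implicit.
Unset Printing Implicit Defensive.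
Import GRing.Theory.
Local Open Scope ring_scope.

Section IdealsUnderGalois.
Variables (F : fieldType) (L : splittingFieldType F).
Implicit Types (g : gal_of {:L}) (V : {pred F}) (S M J : L -> Prop).

Lemma galKV g : cancel g (g^-1)%g.
Proof. by move=> a; rewrite -galM ?memvf // mulgV gal_id. Qed.

Lemma galVK g : cancel (g^-1)%g g.
Proof. by move=> a; rewrite -galM ?memvf // mulVg gal_id. Qed.

Lemma integral_over_gal V g x : integral_over V x -> integral_over V (g x).
Proof.
case=> p [p_monic pV p_root]; exists p; split=> //.
have -> : map_poly (in_alg L) p = map_poly g (map_poly (in_alg L) p).
  rewrite -map_poly_comp; apply: eq_map_poly => c /=.
  by rewrite linearZ /= rmorph1.
by rewrite /root horner_map (eqP p_root) rmorph0.
Qed.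

Lemma integral_over_galE V g x : integral_over V (g x) <-> integral_over V x.
Proof.
split; last exact: integral_over_gal.
by move/(integral_over_gal (g^-1)%g); rewrite galKV.
Qed.

Lemma ideal_of_gal S g J :
  (forall x, S (g x) <-> S x) -> ideal_of S J -> ideal_of S (fun x => J (g x)).
Proof.
move=> Sg [JS J0 JD JN JM]; split.
- by move=> x /JS /Sg.
- by rewrite rmorph0.
- by move=> x y Jx Jy; rewrite rmorphD; apply: JD.
- by move=> x Jx; rewrite rmorphN; apply: JN.
- by move=> s x Ss Jx; rewrite rmorphM; apply: JM => //; apply/Sg.
Qed.

Lemma maximal_ideal_of_gal V g M :
  maximal_ideal_of (integral_over V) M ->
  maximal_ideal_of (integral_over V) (fun x => M (g x)).
Proof.
have Sg h x := integral_over_galE V h x.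
move=> [M_ideal M1 M_max]; split; first exact: ideal_of_gal.
  by rewrite rmorph1.
move=> J J_ideal MJ J1 x Jx; apply: (M_max (fun y => J ((g^-1)%g y))).
- exact: ideal_of_gal.
- by move=> y My; apply: MJ; rewrite galVK.
- by rewrite rmorph1.
- by rewrite galKV.
Qed.

Lemma ideal_sq_mul M x y : M x -> M y -> ideal_sq M (x * y).
Proof.
move=> Mx My; exists [:: (x, y)]; split; last by rewrite big_seq1.
by move=> p; rewrite inE => /eqP ->.
Qed.

End IdealsUnderGalois.

Lemma normalized_2cocycle_inv (F : fieldType) (L : splittingFieldType F)
    (f : gal_of {:L} -> gal_of {:L} -> L) (s b : gal_of {:L}) :
  normalized_2cocycle f ->
  s (f b (b^-1)%g) = f s b * f (gcomp s b) (b^-1)%g.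
Proof.
move=> [cocycle norm]; have := cocycle s b (b^-1)%g.
by rewrite /gcomp mulVg (proj2 (norm s)) mulr1.
Qed.

Theorem proposition2p10 (F : fieldType) (L : splittingFieldType F)
  (V : {pred F}) (f : gal_of {:L} -> gal_of {:L} -> L) :
  valuation_ring_of V ->
  galois 1%VS {:L} ->
  normalized_2cocycle f ->
  (forall s t, integral_over V (f s t) /\ f s t != 0) ->
  (forall M, maximal_ideal_of (integral_over V) M ->
     forall s t, ~ ideal_sq M (f s t)) ->
  forall M, maximal_ideal_of (integral_over V) M ->
    Gr_is_chain (integral_over V) f M.
Proof.
move=> _ _ f_cocycle _ f_notin_sq M M_max A B [s ->] [t ->].
have [Mst | ?] := classic (M (f s (gcomp (s^-1)%g t))); last by left; exists s, t.
have [Mts | ?] := classic (M (f t (gcomp (t^-1)%g s))); last by right; exists t, s.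
exfalso; set b := gcomp (s^-1)%g t in Mst.
have sb_t : gcomp s b = t by rewrite /b /gcomp -mulgA mulVg mulg1.
have bV : (b^-1)%g = gcomp (t^-1)%g s by rewrite /b /gcomp invMg invgK.
apply: (f_notin_sq _ (maximal_ideal_of_gal s M_max) b (b^-1)%g).
rewrite -[f b _](galKV s) (normalized_2cocycle_inv _ _ f_cocycle) sb_t rmorphM.
by apply: ideal_sq_mul; rewrite galVK // bV.
Qed.
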